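(* Let $\vec{p'}=(p'_{kl})$ be a probability vector of length $N^2$ and $\mathcal{L}=\sum_{k,l}p'_{kl}\mathcal{L}_{kl}$ with $\mathcal{L}_{kl}=U_{kl}\otimes\overline{U}_{kl}-\mathbb{I}_{N^2}$. Then the $N\times N$ matrix $\mathcal{K}$ with entries $\mathcal{K}_{ij}=\langle ii|\mathcal{L}|jj\rangle$ (the decohered and reshaped diagonal of the reshuffled generator) equals $$\mathcal{K}=\sum_{k=0}^{N-1}q'_kX^k-\mathbb{I}_N=\sum_kq'_k\mathcal{K}_k,\qquad q'_k=\sum_lp'_{kl},\ \ \mathcal{K}_k=X^k-\mathbb{I}_N,$$ and $\mathcal{K}$ (as well as each $\mathcal{K}_k$) is a valid Kolmogorov operator: $\mathcal{K}_{ij}\ge0$ for $i\ne j$ and $\sum_i\mathcal{K}_{ij}=0$ for every $j$.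
   Context: Let $N\ge2$, $\omega=e^{2\pi i/N}$, $X|j\rangle=|j\oplus1\rangle$ (addition mod $N$), $Z=\mathrm{diag}(1,\omega,\dots,\omega^{N-1})$, Weyl unitaries $U_{kl}=X^kZ^l$. Superoperators are $N^2\times N^2$ matrices acting on $|A\rangle\rangle=\sum A_{ij}|i\rangle|j\rangle$, with $\rho\mapsto K\rho K^\dagger$ corresponding to $K\otimes\overline K$; $|ii\rangle=|i\rangle\otimes|i\rangle$. *)

From HB Require Import structures.
From mathcomp Require Import all_boot all_order all_algebra.
From mathcomp Require Import complex mxtens.
From mathcomp Require Import reals trigo.
Set Implicit Arguments. Unset Strict Implicit. Unset Printing Implicit Defensive.
Import Order.TTheory GRing.Theory Num.Theory.
Local Open Scope ring_scope.
Local Open Scope complex_scope.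

Section Weyl.
Variables (R : realType) (N : nat).
Local Notation C := R[i].

Definition omega : C := (cos (2 * pi / N%:R)) +i* (sin (2 * pi / N%:R)).

Definition shiftX : 'M[C]_N := \matrix_(i, j) ((i : nat) == (j.+1 %% N)%N)%:R.

Definition clockZ : 'M[C]_N := \matrix_(i, j) ((i == j)%:R * omega ^+ i).

Definition weylU (k l : 'I_N) : 'M[C]_N := shiftX ^+ k * clockZ ^+ l.

Definition conjmx (m n : nat) (A : 'M[C]_(m, n)) : 'M[C]_(m, n) :=
  map_mx (@conjc R) A.

Definition gen_kl (k l : 'I_N) : 'M[C]_(N * N) :=
  weylU k l *t conjmx (weylU k l) - 1%:M.

Definition gen (p : 'I_N -> 'I_N -> R) : 'M[C]_(N * N) :=
  \sum_(k < N) \sum_(l < N) (p k l)%:C *: gen_kl k l.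

(* K_ij = <ii| L |jj>,  with |ij> = |i> (x) |j> at index mxtens_index (i, j) *)
Definition reshaped_diag (L : 'M[C]_(N * N)) : 'M[C]_N :=
  \matrix_(i, j) L (mxtens_index (i, i)) (mxtens_index (j, j)).

Definition marg (p : 'I_N -> 'I_N -> R) (k : 'I_N) : R := \sum_(l < N) p k l.

End Weyl.

(* Kolmogorov operator (generator of a classical continuous-time Markov chain,
   column convention): off-diagonal entries nonnegative (hence real),
   column sums zero. *)
Definition kolmogorov (R : realType) (N : nat) (K : 'M[R[i]]_N) : Prop :=
  (forall i j : 'I_N, i != j -> 0 <= K i j) /\
  (forall j : 'I_N, \sum_(i < N) K i j = 0).

From Pilot Require Import Defs.
From HB Require Import structures.
From mathcomp Require Import all_boot all_order all_algebra.
From mathcomp Require Import complex mxtens.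
From mathcomp Require Import reals trigo.
Import Order.TTheory GRing.Theory Num.Theory.
Local Open Scope ring_scope.
Local Open Scope complex_scope.

(* On the diagonal block |ii><jj| the superoperator U (x) conj U has entry
   |U_ij|^2.  For U = X^k Z^l the phase of Z drops out and |U_ij|^2 = (X^k)_ij,
   so the decohered generator is sum_k q'_k (X^k - 1).  Each X^k is a
   permutation matrix, hence column stochastic, and P - 1 is a Kolmogorov
   operator for every column-stochastic P; Kolmogorov operators form a cone. *)

Section Kolmogorov.
Variables (R : realType) (n : nat).
Local Notation C := R[i].

Lemma kolmogorov_stochastic_sub1 (P : 'M[C]_n) :
  (forall i j, 0 <= P i j) -> (forall j, \sum_i P i j = 1) ->
  kolmogorov (P - 1%:M).
Proof.
move=> P_ge0 P_col; split=> [i j neq_ij | j].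
  by rewrite !mxE (negbTE neq_ij) subr0.
under eq_bigr do rewrite !mxE.
rewrite sumrB P_col (bigD1 j) //= eqxx big1 ?addr0 ?subrr // => i neq_ij.
by rewrite (negbTE neq_ij).
Qed.

Lemma kolmogorov_sum (I : finType) (c : I -> C) (K : I -> 'M[C]_n) :
  (forall k, 0 <= c k) -> (forall k, kolmogorov (K k)) ->
  kolmogorov (\sum_k c k *: K k).
Proof.
move=> c_ge0 K_kol; split=> [i j neq_ij | j].
  rewrite summxE; apply: sumr_ge0 => k _; rewrite mxE.
  by apply: mulr_ge0 => //; case: (K_kol k) => K_off _; apply: K_off.
under eq_bigr do rewrite summxE.
rewrite exchange_big big1 //= => k _.
under eq_bigr do rewrite mxE.
by rewrite -mulr_sumr; case: (K_kol k) => _ ->; rewrite mulr0.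
Qed.

End Kolmogorov.

Section Weyl.
Variables (R : realType) (N : nat).
Local Notation C := R[i].
Local Notation X := (shiftX R N).
Local Notation omega := (omega R N).

Lemma omega_mulJ : omega * conjc omega = 1.
Proof.
apply/eqP; rewrite eq_complex /=; apply/andP; split; apply/eqP.
  by rewrite mulrN opprK -!expr2 cos2Dsin2.
by rewrite mulrN mulrC addNr.
Qed.

Lemma shiftX_expE (k : nat) (i j : 'I_N) :
  (X ^+ k) i j = ((i : nat) == (j + k) %% N)%N%:R.
Proof.
have N_gt0 : (0 < N)%N by apply: leq_ltn_trans (ltn_ord j).
elim: k i j => [|k IHk] i j; first by rewrite expr0 mxE addn0 modn_small.
have lt_jN : (j.+1 %% N < N)%N by rewrite ltn_mod.
rewrite exprSr mxE (bigD1 (Ordinal lt_jN)) //= big1 ?addr0.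
  by rewrite IHk !mxE eqxx mulr1 modnDml addSnnS.
move=> m neq_m; rewrite !mxE.
suff /negbTE-> : ((m : nat) != j.+1 %% N)%N by rewrite mulr0.
by apply: contra neq_m => /eqP eq_m; apply/eqP/val_inj.
Qed.

Lemma shiftX_exp_ge0 (k : nat) (i j : 'I_N) : 0 <= (X ^+ k) i j.
Proof. by rewrite shiftX_expE ler0n. Qed.

Lemma shiftX_exp_col (k : nat) (j : 'I_N) : \sum_i (X ^+ k) i j = 1.
Proof.
have N_gt0 : (0 < N)%N by apply: leq_ltn_trans (ltn_ord j).
have lt_jkN : ((j + k) %% N < N)%N by rewrite ltn_mod.
rewrite (bigD1 (Ordinal lt_jkN)) //= big1 ?addr0; first by rewrite shiftX_expE eqxx.
move=> m neq_m; rewrite shiftX_expE.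
suff /negbTE-> : ((m : nat) != (j + k) %% N)%N by [].
by apply: contra neq_m => /eqP eq_m; apply/eqP/val_inj.
Qed.

Lemma kolmogorov_shiftX_exp (k : nat) : kolmogorov (X ^+ k - 1%:M).
Proof.
apply: kolmogorov_stochastic_sub1; [exact: shiftX_exp_ge0 | exact: shiftX_exp_col].
Qed.

Lemma clockZ_expE (l : nat) (i j : 'I_N) :
  (clockZ R N ^+ l) i j = (i == j)%:R * omega ^+ (i * l).
Proof.
elim: l i => [|l IHl] i; first by rewrite expr0 !mxE muln0 expr0 mulr1.
rewrite exprSr mxE (bigD1 j) //= big1 ?addr0.
  rewrite IHl !mxE eqxx mul1r mulnS addnC exprD.
  by case: eqP => [->|]; rewrite ?mul0r ?mul1r.
by move=> m neq_mj; rewrite !mxE (negbTE neq_mj) mul0r mulr0.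
Qed.

Lemma weylUE (k l i j : 'I_N) :
  weylU R k l i j = (X ^+ k) i j * omega ^+ (j * l).
Proof.
rewrite /weylU mxE (bigD1 j) //= big1 ?addr0.
  by rewrite clockZ_expE eqxx mul1r.
by move=> m neq_mj; rewrite clockZ_expE (negbTE neq_mj) mul0r mulr0.
Qed.

Lemma weylU_mulJ (k l i j : 'I_N) :
  weylU R k l i j * conjc (weylU R k l i j) = (X ^+ k) i j.
Proof.
rewrite weylUE rmorphM rmorphXn /= shiftX_expE conjc_nat.
rewrite mulrACA -exprMn omega_mulJ expr1n mulr1.
by case: eqP; rewrite ?mulr0 ?mulr1.
Qed.

(* A bare [conjmx] would resolve to mathcomp's [mxred.conjmx]. *)
Lemma tensmx_conjmx_diagE (A : 'M[C]_N) (i j : 'I_N) :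
  (A *t Defs.conjmx A) (mxtens_index (i, i)) (mxtens_index (j, j)) =
  A i j * conjc (A i j).
Proof. by rewrite tensmxE mxE. Qed.

Lemma reshaped_diag_gen_kl (k l : 'I_N) :
  reshaped_diag (gen_kl R k l) = X ^+ k - 1%:M.
Proof.
apply/matrixP => i j.
rewrite mxE /gen_kl mxE tensmx_conjmx_diagE weylU_mulJ !mxE.
by rewrite (inj_eq (can_inj (@mxtens_indexK _ _))) xpair_eqE andbb.
Qed.

Lemma reshaped_diag_gen (p : 'I_N -> 'I_N -> R) :
  reshaped_diag (gen p) = \sum_k (marg p k)%:C *: (X ^+ k - 1%:M).
Proof.
apply/matrixP => i j; rewrite mxE !summxE; apply: eq_bigr => k _.
rewrite summxE /marg rmorph_sum scaler_suml summxE.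
apply: eq_bigr => l _.
by rewrite mxE [RHS]mxE -(reshaped_diag_gen_kl k l) [reshaped_diag _ _ _]mxE.
Qed.

End Weyl.

Theorem lemma3 (R : realType) (N : nat) (hN : (2 <= N)%N)
  (p : 'I_N -> 'I_N -> R)
  (hp0 : forall k l, 0 <= p k l)
  (hp1 : \sum_(k < N) \sum_(l < N) p k l = 1) :
  let K := reshaped_diag (gen p) in
  K = \sum_(k < N) (marg p k)%:C *: shiftX R N ^+ k - 1%:M /\
  K = \sum_(k < N) (marg p k)%:C *: (shiftX R N ^+ k - 1%:M) /\
  kolmogorov K /\
  (forall k : 'I_N, kolmogorov (shiftX R N ^+ k - 1%:M)).
Proof.
move=> K.
have sum_marg : \sum_(k < N) (marg p k)%:C = 1 :> R[i].
  by rewrite -rmorph_sum /marg hp1.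
have marg_ge0 k : 0 <= (marg p k)%:C :> R[i].
  by rewrite ler0c /marg sumr_ge0.
have K_combination : K = \sum_(k < N) (marg p k)%:C *: (shiftX R N ^+ k - 1%:M).
  exact: reshaped_diag_gen.
split.
  rewrite K_combination; under eq_bigr do rewrite scalerBr.
  by rewrite sumrB -scaler_suml sum_marg scale1r.
split; first exact: K_combination.
split; last exact: kolmogorov_shiftX_exp.
rewrite K_combination; apply: kolmogorov_sum => [k | k]; first exact: marg_ge0.
exact: kolmogorov_shiftX_exp.
Qed.
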